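(* Let $X$ and $Y$ be discrete random variables taking values in a finite set $\mathcal{A}$ with $|\mathcal{A}|=M\ge 2$, with $d_{\mathrm{TV}}(X,Y)>0$. Assume that for some positive constants $\varepsilon_1,\varepsilon_2$, $$d_{\mathrm{TV}}(X,Y)\le\varepsilon_1\le 1-\frac{1}{M\varepsilon_2},\qquad \frac{d_{\mathrm{loc}}(X,Y)}{d_{\mathrm{TV}}(X,Y)}\le\varepsilon_2\le 1.$$ Then $$|H(X)-H(Y)|\le\varepsilon_1\log(M\varepsilon_2-1)+h(\varepsilon_1).$$
   Context: For discrete random variables $X,Y$ on a set $\mathcal{A}$ with probability mass functions $P_X,P_Y$, the local distance is $d_{\mathrm{loc}}(X,Y) = \sup_{u\in\mathcal{A}} |P_X(u)-P_Y(u)|$ and the total variation distance is $d_{\mathrm{TV}}(X,Y) = \frac12\sum_{u\in\mathcal{A}}|P_X(u)-P_Y(u)|$. All logarithms are natural and entropies are in nats, with $0\log0=0$. $h(x) = -x\log x-(1-x)\log(1-x)$ denotes the binary entropy function. *)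

From Stdlib Require Import Reals Lra Lia.
Open Scope R_scope.

(* The finite alphabet A with |A| = M is identified with {0, ..., M-1}.
   A probability mass function on A is a function p : nat -> R, of which
   only the values at i < M matter. *)

Fixpoint sum_lt (n : nat) (f : nat -> R) : R :=
  match n with
  | O => 0
  | S k => sum_lt k f + f k
  end.

(* max_lt n f = max_{i<n} f i  (0 for n = 0; only used with values >= 0) *)
Fixpoint max_lt (n : nat) (f : nat -> R) : R :=
  match n with
  | O => 0
  | S k => Rmax (max_lt k f) (f k)
  end.

Definition is_pmf (M : nat) (p : nat -> R) : Prop :=
  (forall i, (i < M)%nat -> 0 <= p i) /\ sum_lt M p = 1.

Definition xlnx (x : R) : R := if Rlt_dec 0 x then x * ln x else 0.

Definition entropy (M : nat) (p : nat -> R) : R := - sum_lt M (fun i => xlnx (p i)).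

Definition d_loc (M : nat) (p q : nat -> R) : R := max_lt M (fun i => Rabs (p i - q i)).

Definition d_TV (M : nat) (p q : nat -> R) : R := / 2 * sum_lt M (fun i => Rabs (p i - q i)).

Definition hbin (x : R) : R := - xlnx x - xlnx (1 - x).

From Stdlib Require Import Reals Lra Lia.
Open Scope R_scope.

(* Write t = d_TV(p,q) and split p = m + a, q = m + b, where m = min(p,q) is
   the overlap and a = (p-q)^+, b = (q-p)^+ are the excesses: a and b have
   disjoint supports, each has total mass t, and m has mass 1 - t.
   Superadditivity of x ln x and a Gibbs-type bound for merging masses give
     H(q) - H(p) <= h(t) + sum a ln a - sum b ln b.
   When every |p_i - q_i| <= e t, each excess has support of size at least
   1/e, so the support N of b satisfies e N <= M e - 1; bounding
   sum a ln a <= t ln (e t) and - sum b ln b <= t ln N - t ln t yields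
     H(q) - H(p) <= h(t) + t ln (M e - 1)        (entropy_gap_bound).
   By symmetry this bounds |H(p) - H(q)|; finally s |-> s ln (M e - 1) + h(s)
   is nondecreasing on (0, eps1] under eps1 <= 1 - 1/(M e), which lets us
   replace t by eps1 (tilted_hbin_mono, log_odds_le). *)

Lemma ln_le_compat x y : 0 < x -> x <= y -> ln x <= ln y.
Proof.
  intros Hx Hxy. destruct (Rle_lt_or_eq_dec _ _ Hxy) as [Hlt | ->].
  - left. now apply ln_increasing.
  - lra.
Qed.

Lemma ln_le_sub1 x : 0 < x -> ln x <= x - 1.
Proof. intro Hx. pose proof (exp_ineq1_le (ln x)) as H. rewrite exp_ln in H; lra. Qed.

Lemma gibbs x y : 0 < x -> 0 < y -> x - y <= x * ln x - x * ln y.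
Proof.
  intros Hx Hy.
  assert (Hyx : 0 < y / x) by (apply Rdiv_lt_0_compat; lra).
  pose proof (ln_le_sub1 _ Hyx) as H.
  unfold Rdiv in H. rewrite ln_mult, ln_Rinv in H by (auto; apply Rinv_0_lt_compat; lra).
  apply Rmult_le_compat_l with (r := x) in H; [|lra].
  replace (x * (y * / x - 1)) with (y - x) in H by (field; lra). lra.
Qed.

Lemma sum_lt_ext n f g :
  (forall i, (i < n)%nat -> f i = g i) -> sum_lt n f = sum_lt n g.
Proof. induction n; simpl; intros H; auto. rewrite IHn, H; auto; intros; apply H; lia. Qed.

Lemma sum_lt_le n f g :
  (forall i, (i < n)%nat -> f i <= g i) -> sum_lt n f <= sum_lt n g.
Proof.
  induction n; simpl; intros H; [lra|].
  assert (f n <= g n) by (apply H; lia).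
  assert (sum_lt n f <= sum_lt n g) by (apply IHn; intros; apply H; lia). lra.
Qed.

Lemma sum_lt_plus n f g : sum_lt n (fun i => f i + g i) = sum_lt n f + sum_lt n g.
Proof. induction n; simpl; [lra|]. rewrite IHn; lra. Qed.

Lemma sum_lt_minus n f g : sum_lt n (fun i => f i - g i) = sum_lt n f - sum_lt n g.
Proof. induction n; simpl; [lra|]. rewrite IHn; lra. Qed.

Lemma sum_lt_scal n c f : sum_lt n (fun i => c * f i) = c * sum_lt n f.
Proof. induction n; simpl; [lra|]. rewrite IHn; lra. Qed.

Lemma sum_lt_const n c : sum_lt n (fun _ => c) = INR n * c.
Proof. induction n; simpl sum_lt; [simpl; lra|]. rewrite IHn, S_INR; lra. Qed.

Lemma max_lt_ge n f i : (i < n)%nat -> f i <= max_lt n f.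
Proof.
  induction n; intros Hi; [lia|]. simpl. destruct (Nat.eq_dec i n) as [-> | Hne].
  - apply Rmax_r.
  - eapply Rle_trans; [apply IHn; lia | apply Rmax_l].
Qed.

Lemma xlnx_pos x : 0 < x -> xlnx x = x * ln x.
Proof. intro H; unfold xlnx; destruct (Rlt_dec 0 x); [auto | lra]. Qed.

Lemma xlnx_0 : xlnx 0 = 0.
Proof. unfold xlnx; destruct (Rlt_dec 0 0); lra. Qed.

Lemma xlnx_superadditive x y :
  0 <= x -> 0 <= y -> xlnx x + xlnx y <= xlnx (x + y).
Proof.
  intros Hx Hy.
  destruct (Rle_lt_or_eq_dec _ _ Hx) as [Hx' | <-];
    [| rewrite xlnx_0, !Rplus_0_l; lra].
  destruct (Rle_lt_or_eq_dec _ _ Hy) as [Hy' | <-];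
    [| rewrite xlnx_0, !Rplus_0_r; lra].
  rewrite !xlnx_pos by lra.
  assert (ln x <= ln (x + y)) by (apply ln_le_compat; lra).
  assert (ln y <= ln (x + y)) by (apply ln_le_compat; lra).
  nra.
Qed.

(* This is Gibbs' inequality against the split ((1-s)(x+y), s(x+y)). *)
Lemma xlnx_merge_le x y s :
  0 <= x -> 0 <= y -> 0 < s < 1 ->
  xlnx (x + y) <= xlnx x + xlnx y - x * ln (1 - s) - y * ln s.
Proof.
  intros Hx Hy Hs.
  assert (L1 : ln (1 - s) < 0) by (rewrite <- ln_1; apply ln_increasing; lra).
  assert (L2 : ln s < 0) by (rewrite <- ln_1; apply ln_increasing; lra).
  destruct (Rle_lt_or_eq_dec _ _ Hx) as [Hx' | <-];
    [| rewrite xlnx_0, !Rplus_0_l; nra].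
  destruct (Rle_lt_or_eq_dec _ _ Hy) as [Hy' | <-];
    [| rewrite xlnx_0, !Rplus_0_r; nra].
  rewrite !xlnx_pos by lra.
  pose proof (gibbs x ((1 - s) * (x + y)) Hx' ltac:(nra)) as Gx.
  pose proof (gibbs y (s * (x + y)) Hy' ltac:(nra)) as Gy.
  rewrite ln_mult in Gx, Gy by lra. nra.
Qed.

Lemma xlnx_le_mul_ln x c : 0 <= x -> x <= c -> 0 < c -> xlnx x <= x * ln c.
Proof.
  intros Hx Hxc Hc.
  destruct (Rle_lt_or_eq_dec _ _ Hx) as [Hx' | <-]; [| rewrite xlnx_0; lra].
  rewrite xlnx_pos by lra.
  assert (ln x <= ln c) by (apply ln_le_compat; lra). nra.
Qed.

Definition pos_ind (x : R) : R := if Rlt_dec 0 x then 1 else 0.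

Definition supp_size (n : nat) (f : nat -> R) : R := sum_lt n (fun i => pos_ind (f i)).

(* Gibbs' inequality against the constant K, valid also for x = 0
   thanks to the indicator. *)
Lemma neg_xlnx_le x K : 0 <= x -> 0 < K -> - xlnx x <= pos_ind x * K - x - x * ln K.
Proof.
  intros Hx HK. unfold pos_ind.
  destruct (Rle_lt_or_eq_dec _ _ Hx) as [Hx' | <-].
  - rewrite xlnx_pos by lra. destruct (Rlt_dec 0 x); [|lra].
    pose proof (gibbs x K Hx' HK). lra.
  - rewrite xlnx_0. destruct (Rlt_dec 0 0); lra.
Qed.

Lemma le_mul_pos_ind x c : 0 <= x -> x <= c -> x <= c * pos_ind x.
Proof. intros. unfold pos_ind; destruct (Rlt_dec 0 x); lra. Qed.

Section MassVector.
Variables (n : nat) (f : nat -> R).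
Hypothesis f_nonneg : forall i, (i < n)%nat -> 0 <= f i.

Lemma sum_xlnx_le_bound c :
  0 < c -> (forall i, (i < n)%nat -> f i <= c) ->
  sum_lt n (fun i => xlnx (f i)) <= sum_lt n f * ln c.
Proof.
  intros Hc Hfc. rewrite Rmult_comm, <- sum_lt_scal.
  apply sum_lt_le; intros i Hi. rewrite Rmult_comm.
  apply xlnx_le_mul_ln; auto.
Qed.

Lemma sum_le_supp_size c :
  (forall i, (i < n)%nat -> f i <= c) -> sum_lt n f <= c * supp_size n f.
Proof.
  intros Hfc. unfold supp_size. rewrite <- sum_lt_scal.
  apply sum_lt_le; intros i Hi. apply le_mul_pos_ind; auto.
Qed.

Lemma neg_sum_xlnx_le_supp :
  0 < sum_lt n f -> 0 < supp_size n f ->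
  - sum_lt n (fun i => xlnx (f i))
    <= sum_lt n f * ln (supp_size n f) - sum_lt n f * ln (sum_lt n f).
Proof.
  set (s := sum_lt n f). set (N := supp_size n f). intros Hs HN.
  set (K := s / N).
  assert (HK : 0 < K) by (apply Rdiv_lt_0_compat; lra).
  assert (H : sum_lt n (fun i => - xlnx (f i))
              <= sum_lt n (fun i => K * pos_ind (f i) + (-1) * f i + (- ln K) * f i)).
  { apply sum_lt_le; intros i Hi.
    pose proof (neg_xlnx_le (f i) K (f_nonneg i Hi) HK). lra. }
  rewrite !sum_lt_plus, !sum_lt_scal in H.
  rewrite (sum_lt_ext n _ (fun i => (-1) * xlnx (f i))), sum_lt_scal in H
    by (intros; ring).
  change (sum_lt n (fun i => pos_ind (f i))) with N in H. fold s in H.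
  assert (LK : ln K = ln s - ln N).
  { unfold K, Rdiv. rewrite ln_mult, ln_Rinv; try lra. apply Rinv_0_lt_compat; lra. }
  replace (K * N) with s in H by (unfold K; field; lra).
  rewrite LK in H. lra.
Qed.

End MassVector.

Definition overlap (p q : nat -> R) (i : nat) : R := Rmin (p i) (q i).
Definition excess (p q : nat -> R) (i : nat) : R := Rmax 0 (p i - q i).

Lemma overlap_add_excess p q i : p i = overlap p q i + excess p q i.
Proof.
  unfold overlap, excess, Rmin, Rmax.
  destruct (Rle_dec (p i) (q i)); destruct (Rle_dec 0 (p i - q i)); lra.
Qed.

Lemma overlap_comm p q i : overlap p q i = overlap q p i.
Proof. apply Rmin_comm. Qed.

Lemma excess_nonneg p q i : 0 <= excess p q i.
Proof. apply Rmax_l. Qed.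

Lemma excess_add_excess p q i : excess p q i + excess q p i = Rabs (p i - q i).
Proof.
  unfold excess, Rmax, Rabs.
  destruct (Rcase_abs (p i - q i)); destruct (Rle_dec 0 (p i - q i));
    destruct (Rle_dec 0 (q i - p i)); lra.
Qed.

Lemma excess_disjoint p q i : pos_ind (excess p q i) + pos_ind (excess q p i) <= 1.
Proof.
  unfold pos_ind, excess, Rmax.
  destruct (Rle_dec 0 (p i - q i)); destruct (Rle_dec 0 (q i - p i));
    destruct (Rlt_dec 0 (p i - q i)); destruct (Rlt_dec 0 (q i - p i));
    destruct (Rlt_dec 0 0); lra.
Qed.

Lemma dTV_sym M p q : d_TV M p q = d_TV M q p.
Proof. unfold d_TV; f_equal; apply sum_lt_ext; intros; apply Rabs_minus_sym. Qed.

Lemma excess_supp_size_le M p q :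
  supp_size M (excess p q) + supp_size M (excess q p) <= INR M.
Proof.
  unfold supp_size. rewrite <- sum_lt_plus.
  rewrite <- (Rmult_1_r (INR M)), <- sum_lt_const.
  apply sum_lt_le; intros; apply excess_disjoint.
Qed.

Section TwoPmfs.
Variables (M : nat) (p q : nat -> R).
Hypotheses (Hp : is_pmf M p) (Hq : is_pmf M q).

Lemma sum_excess : sum_lt M (excess p q) = d_TV M p q.
Proof.
  destruct Hp as [_ Sp], Hq as [_ Sq].
  assert (Sab : sum_lt M (excess p q) + sum_lt M (excess q p) = 2 * d_TV M p q).
  { rewrite <- sum_lt_plus. unfold d_TV.
    rewrite (sum_lt_ext M _ (fun i => Rabs (p i - q i)))
      by (intros; apply excess_add_excess). lra. }
  assert (Sdiff : sum_lt M (excess p q) - sum_lt M (excess q p) = 0).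
  { rewrite <- sum_lt_minus, (sum_lt_ext M _ (fun i => p i - q i)).
    - rewrite sum_lt_minus; lra.
    - intros i _. rewrite (overlap_add_excess p q i) at 1.
      rewrite (overlap_add_excess q p i), overlap_comm; ring. }
  lra.
Qed.

Lemma sum_overlap : sum_lt M (overlap p q) = 1 - d_TV M p q.
Proof.
  destruct Hp as [_ Sp].
  rewrite (sum_lt_ext M _ (fun i => p i - excess p q i)).
  - rewrite sum_lt_minus, sum_excess; lra.
  - intros i _. rewrite (overlap_add_excess p q i). ring.
Qed.

Lemma entropy_gap_excess :
  0 < d_TV M p q < 1 ->
  entropy M q - entropy M p <=
    hbin (d_TV M p q) + sum_lt M (fun i => xlnx (excess p q i))
                      - sum_lt M (fun i => xlnx (excess q p i)).
Proof.
  set (t := d_TV M p q). intro Ht.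
  destruct Hp as [Pp _], Hq as [Pq _].
  assert (Hm : forall i, (i < M)%nat -> 0 <= overlap p q i).
  { intros i Hi. unfold overlap, Rmin.
    destruct (Rle_dec (p i) (q i)); [apply Pp | apply Pq]; auto. }
  assert (Hqm : sum_lt M (fun i => xlnx (overlap p q i))
                + sum_lt M (fun i => xlnx (excess q p i))
                <= sum_lt M (fun i => xlnx (q i))).
  { rewrite <- sum_lt_plus. apply sum_lt_le; intros i Hi.
    rewrite (overlap_add_excess q p i), (overlap_comm q p).
    apply xlnx_superadditive; auto using excess_nonneg. }
  assert (Hpm : sum_lt M (fun i => xlnx (p i))
      <= sum_lt M (fun i => xlnx (overlap p q i) + xlnx (excess p q i)
                            + (- ln (1 - t)) * overlap p q i
                            + (- ln t) * excess p q i)).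
  { apply sum_lt_le; intros i Hi. rewrite (overlap_add_excess p q i) at 1.
    pose proof (xlnx_merge_le _ _ t (Hm i Hi) (excess_nonneg p q i) Ht). lra. }
  rewrite !sum_lt_plus, !sum_lt_scal, sum_overlap, sum_excess in Hpm.
  assert (Hh : hbin t = - t * ln t - (1 - t) * ln (1 - t)).
  { unfold hbin; rewrite !xlnx_pos by lra; ring. }
  unfold entropy. fold t in Hpm. lra.
Qed.

End TwoPmfs.

(* Each excess part has mass t and entries at most e t, hence support of
   size at least 1/e; being disjoint, the support N of b = excess q p obeys
   e N <= M e - 1. Then sum a ln a <= t ln (e t) and
   - sum b ln b <= t ln N - t ln t, whose sum is t ln (e N). *)
Lemma entropy_gap_bound M p q e :
  is_pmf M p -> is_pmf M q -> 0 < d_TV M p q < 1 -> 0 < e ->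
  (forall i, (i < M)%nat -> Rabs (p i - q i) <= e * d_TV M p q) ->
  entropy M q - entropy M p <= hbin (d_TV M p q) + d_TV M p q * ln (INR M * e - 1).
Proof.
  intros Hp Hq Ht He Hloc.
  pose proof (entropy_gap_excess M p q Hp Hq Ht) as Hgap.
  pose proof (sum_excess M p q Hp Hq) as Sa.
  pose proof (sum_excess M q p Hq Hp) as Sb. rewrite <- dTV_sym in Sb.
  set (t := d_TV M p q) in *.
  set (a := excess p q) in *. set (b := excess q p) in *.
  assert (Ha : forall i, (i < M)%nat -> a i <= e * t).
  { intros i Hi. pose proof (excess_add_excess p q i). pose proof (excess_nonneg q p i).
    pose proof (Hloc i Hi). unfold a; lra. }
  assert (Hb : forall i, (i < M)%nat -> b i <= e * t).
  { intros i Hi. pose proof (excess_add_excess p q i). pose proof (excess_nonneg p q i).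
    pose proof (Hloc i Hi). unfold b; lra. }
  set (Na := supp_size M a). set (Nb := supp_size M b).
  assert (HNa : 1 <= e * Na).
  { pose proof (sum_le_supp_size M a (fun i _ => excess_nonneg p q i) _ Ha).
    fold Na in H. apply Rmult_le_reg_l with t; lra. }
  assert (HNb : 1 <= e * Nb).
  { pose proof (sum_le_supp_size M b (fun i _ => excess_nonneg q p i) _ Hb).
    fold Nb in H. apply Rmult_le_reg_l with t; lra. }
  assert (HNab : Na + Nb <= INR M) by apply excess_supp_size_le.
  assert (HNb0 : 0 < Nb) by nra.
  assert (Hxa : sum_lt M (fun i => xlnx (a i)) <= t * ln (e * t)).
  { rewrite <- Sa at 1.
    apply (sum_xlnx_le_bound M a (fun i _ => excess_nonneg p q i)); auto. nra. }
  assert (Hxb : - sum_lt M (fun i => xlnx (b i)) <= t * ln Nb - t * ln t).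
  { pose proof (neg_sum_xlnx_le_supp M b (fun i _ => excess_nonneg q p i)) as H.
    fold Nb in H. rewrite Sb in H. apply H; lra. }
  assert (Hlog : ln (e * Nb) <= ln (INR M * e - 1)) by (apply ln_le_compat; nra).
  rewrite !ln_mult in * by lra.
  nra.
Qed.

(* The function s |-> L s + h(s) increases on (0, s0] as long as its
   derivative L + ln((1-s0)/s0) is nonnegative at s0, by concavity. *)
Lemma tilted_hbin_mono L t s :
  0 < t -> t <= s -> s < 1 -> ln s - ln (1 - s) <= L ->
  L * t + hbin t <= L * s + hbin s.
Proof.
  intros. unfold hbin. rewrite !xlnx_pos by lra.
  pose proof (gibbs t s ltac:(lra) ltac:(lra)).
  pose proof (gibbs (1 - t) (1 - s) ltac:(lra) ltac:(lra)).
  nra.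
Qed.

(* The hypothesis eps1 <= 1 - 1/x (with x = M eps2) says exactly that
   the derivative condition of tilted_hbin_mono holds for L = ln (x - 1). *)
Lemma log_odds_le s x :
  0 < s -> 0 < x -> s <= 1 - / x -> ln s - ln (1 - s) <= ln (x - 1).
Proof.
  intros Hs Hx Hsx.
  assert (Hinv : 0 < / x) by (apply Rinv_0_lt_compat; lra).
  assert (Hx1 : 1 <= (1 - s) * x).
  { apply Rmult_le_compat_r with (r := x) in Hsx; [|lra].
    replace ((1 - / x) * x) with (x - 1) in Hsx by (field; lra). nra. }
  assert (Hodds : s <= (1 - s) * (x - 1)) by nra.
  pose proof (ln_le_compat _ _ Hs Hodds) as H.
  rewrite ln_mult in H by nra. lra.
Qed.

Lemma pointwise_le_loc_ratio M p q e :
  0 < d_TV M p q -> d_loc M p q / d_TV M p q <= e ->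
  forall i, (i < M)%nat -> Rabs (p i - q i) <= e * d_TV M p q.
Proof.
  intros Ht Hloc i Hi.
  pose proof (max_lt_ge M (fun i => Rabs (p i - q i)) i Hi) as Hmax.
  apply Rmult_le_compat_r with (r := d_TV M p q) in Hloc; [|lra].
  unfold Rdiv in Hloc. rewrite Rmult_assoc, Rinv_l, Rmult_1_r in Hloc by lra.
  unfold d_loc in Hloc. lra.
Qed.

Theorem corollary2 (M : nat) (p q : nat -> R) (eps1 eps2 : R) :
  (2 <= M)%nat ->
  is_pmf M p -> is_pmf M q ->
  0 < d_TV M p q ->
  0 < eps1 -> 0 < eps2 ->
  d_TV M p q <= eps1 ->
  eps1 <= 1 - / (INR M * eps2) ->
  d_loc M p q / d_TV M p q <= eps2 ->
  eps2 <= 1 ->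
  Rabs (entropy M p - entropy M q) <= eps1 * ln (INR M * eps2 - 1) + hbin eps1.
Proof.
  intros HM Hp Hq Ht He1 He2 Hte1 He1b Hloc _.
  assert (HMe : 0 < INR M * eps2) by (apply Rmult_lt_0_compat; [apply lt_0_INR; lia | lra]).
  assert (He1lt : eps1 < 1) by (pose proof (Rinv_0_lt_compat _ HMe); lra).
  pose proof (pointwise_le_loc_ratio M p q eps2 Ht Hloc) as Hpt.
  pose proof (entropy_gap_bound M p q eps2 Hp Hq ltac:(lra) He2 Hpt) as Bqp.
  pose proof (entropy_gap_bound M q p eps2 Hq Hp) as Bpq.
  rewrite <- dTV_sym in Bpq.
  specialize (Bpq ltac:(lra) He2
                ltac:(intros i Hi; rewrite Rabs_minus_sym; apply Hpt; auto)).
  pose proof (tilted_hbin_mono _ _ _ Ht Hte1 He1lt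
                (log_odds_le _ _ He1 HMe He1b)) as Hmono.
  unfold Rabs; destruct (Rcase_abs (entropy M p - entropy M q)); lra.
Qed.
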